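(* Let $d>0$, $u>0$, $K_z>0$, $K_x>0$, $k>0$, $\sigma>0$, $l>0$, $\rho\ge 0$, and let $S:\mathbb{R}\to\mathbb{R}$ be a smooth odd saturating function with $S(0)=0$ and $S'(0)=1$. Let $\eta(z)=\exp(-z^2/(2\sigma^2))$ and consider, with bias $b=0$, the planar system $$\dot z = -d\,z + u\,S(z) + b - K_z\,\eta(z)\,(z-x),\qquad \dot x = (1-\eta(z))\,K_x\!\left(\tfrac{\rho}{l}\tanh(kz) - x\right) - \eta(z)\,(x-z).$$ Set $u^*=d$. Then the equilibrium $(z,x)=(0,0)$ is locally exponentially stable for $0<u<u^*$ and unstable for $u>u^*$.
   Context: This system models an agent choosing between two spatially separated tasks: $z$ is its opinion (preference, $z>0$ favoring task 1, $z<0$ task 2), $x$ its horizontal position, $d$ a damping coefficient, $u$ an attention gain, $b$ a bias, $K_z$ a coupling weight, $K_x$ a velocity gain. *)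

From Stdlib Require Import Reals.
From Coquelicot Require Import Coquelicot.
Open Scope R_scope.

Definition smooth (S : R -> R) : Prop :=
  forall (n : nat) (x : R), ex_derive (Derive_n S n) x.

Definition odd_fun (S : R -> R) : Prop := forall x, S (- x) = - S x.

Definition saturating (S : R -> R) : Prop :=
  (exists B, forall x, Rabs (S x) <= B) /\ (forall x y, x <= y -> S x <= S y).

Definition eta (sigma z : R) : R := exp (- (z ^ 2) / (2 * sigma ^ 2)).

Definition fz (d u b Kz sigma : R) (S : R -> R) (z x : R) : R :=
  - d * z + u * S z + b - Kz * eta sigma z * (z - x).

Definition fx (Kx k sigma l rho : R) (z x : R) : R :=
  (1 - eta sigma z) * Kx * (rho / l * tanh (k * z) - x) - eta sigma z * (x - z).

Definition nrm (z x : R) : R := sqrt (z ^ 2 + x ^ 2).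

Definition is_sol (d u b Kz Kx k sigma l rho : R) (S : R -> R)
    (T : R) (zt xt : R -> R) : Prop :=
  filterlim zt (at_right 0) (locally (zt 0)) /\
  filterlim xt (at_right 0) (locally (xt 0)) /\
  forall t, 0 < t < T ->
    is_derive zt t (fz d u b Kz sigma S (zt t) (xt t)) /\
    is_derive xt t (fx Kx k sigma l rho (zt t) (xt t)).

Definition loc_exp_stable (d u b Kz Kx k sigma l rho : R) (S : R -> R) : Prop :=
  exists delta M lam : R, 0 < delta /\ 0 < M /\ 0 < lam /\
    forall (T : R) (zt xt : R -> R),
      is_sol d u b Kz Kx k sigma l rho S T zt xt ->
      nrm (zt 0) (xt 0) < delta ->
      forall t, 0 <= t < T ->
        nrm (zt t) (xt t) <= M * exp (- lam * t) * nrm (zt 0) (xt 0).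

Definition lyap_stable (d u b Kz Kx k sigma l rho : R) (S : R -> R) : Prop :=
  forall eps, 0 < eps -> exists delta, 0 < delta /\
    forall (T : R) (zt xt : R -> R),
      is_sol d u b Kz Kx k sigma l rho S T zt xt ->
      nrm (zt 0) (xt 0) < delta ->
      forall t, 0 <= t < T -> nrm (zt t) (xt t) < eps.

Definition unstable (d u b Kz Kx k sigma l rho : R) (S : R -> R) : Prop :=
  ~ lyap_stable d u b Kz Kx k sigma l rho S.

From Stdlib Require Import Reals Lra Psatz.
From Coquelicot Require Import Coquelicot.
Open Scope R_scope.

(* Since [eta] equals 1 up to second order at 0 and [S'(0) = 1], the
   linearization of the field at the origin is [z' = (u - d) z + Kz (x - z)],
   [x' = z - x].  Along it, [W = (u - d) z^2 - Kz (x - z)^2] has derivative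
   [2 ((u - d) z + Kz (x - z))^2 + 2 Kz (x - z)^2], a positive definite form
   whenever [u <> d], and the nonlinear terms do not spoil this near the origin.
   For [u < d], [- W] is thus a strict Lyapunov function: a continuous induction
   keeps solutions in the ball where the estimate holds, and Gronwall's
   inequality gives exponential decay.  For [u > d], [W] is a Chetaev function:
   along the solution from [(y, y)], where [W = (u - d) y^2 > 0], [W] grows
   exponentially, so the solution leaves a fixed ball however small [y] is.
   That solution exists by the Picard-Lindelöf theorem applied to the field
   clipped outside this ball. *)

Definition lipschitz (f : R -> R) (K : R) : Prop :=
  forall t t', Rabs (f t - f t') <= K * Rabs (t - t').

Definition lipschitz2 (G : R -> R -> R) (L : R) : Prop :=
  forall a b a' b', Rabs (G a b - G a' b') <= L * (Rabs (a - a') + Rabs (b - b')).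

Definition clip (a b t : R) : R := Rmax a (Rmin b t).

Lemma clip_in a b t : a <= b -> a <= clip a b t <= b.
Proof. intros; unfold clip, Rmax, Rmin; repeat destruct Rle_dec; lra. Qed.

Lemma clip_id a b t : a <= t <= b -> clip a b t = t.
Proof. intros; unfold clip, Rmax, Rmin; repeat destruct Rle_dec; lra. Qed.

Lemma clip_lipschitz a b : a <= b -> lipschitz (clip a b) 1.
Proof.
  intros Hab t t'; rewrite Rmult_1_l; unfold clip, Rmax, Rmin.
  repeat destruct Rle_dec; unfold Rabs; repeat destruct Rcase_abs; lra.
Qed.

Lemma lipschitz_continuous f K : lipschitz f K -> forall t, continuous f t.
Proof.
  intros Hf t. apply continuity_pt_filterlim. intros eps Heps.
  pose proof (Rabs_pos K) as HK.
  exists (eps / (Rabs K + 1)). split; [apply Rdiv_lt_0_compat; lra|].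
  intros s [_ Hs]; simpl in *; unfold R_dist in *.
  apply Rle_lt_trans with ((Rabs K + 1) * Rabs (s - t)).
  - pose proof (Rabs_pos (s - t)); pose proof (Hf s t); pose proof (Rle_abs K); nra.
  - apply Rmult_lt_reg_r with (/ (Rabs K + 1)); [apply Rinv_0_lt_compat; lra|].
    replace ((Rabs K + 1) * Rabs (s - t) * / (Rabs K + 1)) with (Rabs (s - t)) by (field; lra).
    exact Hs.
Qed.

Lemma lipschitz2_comp G L f h K : 0 <= L -> lipschitz2 G L -> lipschitz f K -> lipschitz h K ->
  lipschitz (fun s => G (f s) (h s)) (L * (2 * K)).
Proof.
  intros HL HG Hf Hh t t'. eapply Rle_trans; [apply HG|].
  pose proof (Hf t t'); pose proof (Hh t t'); pose proof (Rabs_pos (t - t')); nra.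
Qed.

Lemma ex_RInt_cont (f : R -> R) a b : (forall s, continuous f s) -> ex_RInt f a b.
Proof. intros H. apply (ex_RInt_continuous (V:=R_CompleteNormedModule)); auto. Qed.

Lemma RInt_minus_cont (f g : R -> R) a b : (forall s, continuous f s) -> (forall s, continuous g s) ->
  RInt f a b - RInt g a b = RInt (fun s => f s - g s) a b.
Proof. intros Hf Hg. symmetry. apply (RInt_minus (V:=R_CompleteNormedModule)); apply ex_RInt_cont; auto. Qed.

Lemma abs_RInt_le_const_swap (g : R -> R) a b M :
  ex_RInt g a b -> (forall s, Rabs (g s) <= M) -> Rabs (RInt g a b) <= M * Rabs (b - a).
Proof.
  intros He HM. rewrite Rmult_comm. destruct (Rle_dec a b) as [Hab|Hab].
  - rewrite (Rabs_right (b - a)) by lra. apply abs_RInt_le_const; auto.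
  - rewrite <- opp_RInt_swap by (apply ex_RInt_swap; auto).
    change (Rabs (- RInt g b a) <= Rabs (b - a) * M).
    rewrite Rabs_Ropp, (Rabs_left (b - a)), Ropp_minus_distr by lra.
    apply abs_RInt_le_const; auto; [lra | apply ex_RInt_swap; auto].
Qed.

Lemma abs_RInt_le_exp (h : R -> R) c lam t : 0 < lam -> 0 <= t ->
  (forall s, continuous h s) ->
  (forall s, 0 <= s <= t -> Rabs (h s) <= c * exp (lam * s)) ->
  Rabs (RInt h 0 t) <= c * exp (lam * t) / lam.
Proof.
  intros Hl Ht Hc Hb.
  assert (Hc0 : 0 <= c).
  { pose proof (Hb 0 ltac:(lra)) as H0. rewrite Rmult_0_r, exp_0 in H0.
    pose proof (Rabs_pos (h 0)); lra. }
  assert (Hexp : forall s, continuous (fun s => c * exp (lam * s)) s).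
  { intros s. apply (ex_derive_continuous (K:=R_AbsRing) (V:=R_NormedModule)). auto_derive; auto. }
  assert (HI : is_RInt (fun s => c * exp (lam * s)) 0 t
                 (minus (c * exp (lam * t) / lam) (c * exp (lam * 0) / lam))).
  { apply (is_RInt_derive (fun s => c * exp (lam * s) / lam)).
    - intros x _. auto_derive; auto. field. lra.
    - intros x _. apply Hexp. }
  eapply Rle_trans; [apply abs_RInt_le; auto; apply ex_RInt_cont; auto|].
  eapply Rle_trans; [apply RInt_le with (g := fun s => c * exp (lam * s)); auto|].
  - apply ex_RInt_cont. intros; apply continuous_Rabs_comp, Hc.
  - eexists; exact HI.
  - intros x Hx. apply Hb; lra.
  - rewrite (is_RInt_unique _ _ _ _ HI). unfold minus, plus, opp; simpl.
    rewrite Rmult_0_r, exp_0.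
    assert (0 <= c * 1 / lam) by (apply Rdiv_le_0_compat; lra).
    lra.
Qed.

Lemma is_derive_RInt_cont (g : R -> R) w t : (forall s, continuous g s) ->
  is_derive (fun s => w + RInt g 0 s) t (g t).
Proof.
  intros Hc. rewrite <- (Rplus_0_l (g t)).
  apply (is_derive_plus (fun _ => w) (fun s => RInt g 0 s)); [exact (is_derive_const w t)|].
  apply (is_derive_RInt g _ 0 t); [|apply Hc].
  exists (mkposreal 1 Rlt_0_1). intros.
  apply (RInt_correct (V:=R_CompleteNormedModule)). apply ex_RInt_cont; auto.
Qed.

Lemma locally_of_interval (P : R -> Prop) t a b : a < t < b ->
  (forall s, a < s < b -> P s) -> locally t P.
Proof.
  intros Ht HP. assert (He : 0 < Rmin (t - a) (b - t)) by (apply Rmin_pos; lra).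
  exists (mkposreal _ He). intros y Hy. change (Rabs (y - t) < Rmin (t - a) (b - t)) in Hy.
  apply HP. apply Rabs_lt_between in Hy. pose proof (Rmin_l (t - a) (b - t)).
  pose proof (Rmin_r (t - a) (b - t)). lra.
Qed.

Lemma exp_le_mono x y : x <= y -> exp x <= exp y.
Proof. intros [H|H]; [left; now apply exp_increasing | now rewrite H; right]. Qed.

Lemma lipschitz2_le G L L' : L <= L' -> lipschitz2 G L -> lipschitz2 G L'.
Proof.
  intros HLL' HG a b a' b'. eapply Rle_trans; [apply HG|].
  pose proof (Rabs_pos (a - a')). pose proof (Rabs_pos (b - b')).
  apply Rmult_le_compat_r; [lra | exact HLL'].
Qed.

Lemma div_succ_le_1 a : 0 <= a -> a / (a + 1) <= 1.
Proof.
  intros Ha. apply Rmult_le_reg_r with (a + 1); [lra|].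
  unfold Rdiv. rewrite Rmult_assoc, Rinv_l; lra.
Qed.

(** * Comparison principles for differential inequalities *)

Lemma filterlim_Rplus_fun {F} {FF : Filter F} (f g : R -> R) a b :
  filterlim f F (locally a) -> filterlim g F (locally b) ->
  filterlim (fun t => f t + g t) F (locally (a + b)).
Proof. intros Hf Hg. exact (filterlim_comp_2 f g Rplus Hf Hg (filterlim_plus (V:=R_NormedModule) a b)). Qed.

Lemma filterlim_Rmult_fun {F} {FF : Filter F} (f g : R -> R) a b :
  filterlim f F (locally a) -> filterlim g F (locally b) ->
  filterlim (fun t => f t * g t) F (locally (a * b)).
Proof. intros Hf Hg. exact (filterlim_comp_2 f g Rmult Hf Hg (filterlim_mult (K:=R_AbsRing) a b)). Qed.

Lemma filterlim_at_right_of_continuous (f : R -> R) t :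
  continuous f t -> filterlim f (at_right t) (locally (f t)).
Proof.
  intros H. apply (filterlim_filter_le_1 _ (F := locally t)); [|exact H].
  intros P [eps HP]. exists eps. intros y Hy _. now apply HP.
Qed.

Lemma at_right_0_eps (f : R -> R) : filterlim f (at_right 0) (locally (f 0)) ->
  forall eps, 0 < eps -> exists del, 0 < del /\ forall y, 0 < y < del -> Rabs (f y - f 0) < eps.
Proof.
  intros H eps Heps.
  destruct (H (fun y => Rabs (y - f 0) < eps)) as [del Hdel].
  { exists (mkposreal eps Heps). intros y Hy. exact Hy. }
  exists del. split; [apply cond_pos|]. intros y [Hy1 Hy2]. apply Hdel; auto.
  change (Rabs (y - 0) < del). rewrite Rminus_0_r, Rabs_right; lra.
Qed.

Lemma continuity_pt_of_derive f t df : is_derive f t df -> continuity_pt f t.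
Proof.
  intros H. apply continuity_pt_filterlim.
  apply (ex_derive_continuous (K:=R_AbsRing) (V:=R_NormedModule)). eexists; exact H.
Qed.

(* Only right-continuity is available at the initial time, so the mean value
   theorem is applied on [a, t] and then [a] is sent to 0. *)
Lemma nondecreasing_of_derive (f df : R -> R) T t :
  filterlim f (at_right 0) (locally (f 0)) ->
  (forall s, 0 < s < T -> is_derive f s (df s)) ->
  0 <= t < T -> (forall s, 0 < s <= t -> 0 <= df s) -> f 0 <= f t.
Proof.
  intros Hc Hd Ht Hp.
  destruct (Req_dec t 0) as [->|Ht0]; [lra|].
  assert (Hmid : forall a, 0 < a <= t -> f a <= f t).
  { intros a Ha. destruct (Req_dec a t) as [->|]; [lra|].
    destruct (MVT_gen f a t df) as [c [Hcc Heq]].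
    - intros x Hx. apply Hd. unfold Rmin, Rmax in Hx. destruct Rle_dec; lra.
    - intros x Hx. apply (continuity_pt_of_derive _ _ (df x)). apply Hd.
      unfold Rmin, Rmax in Hx. destruct Rle_dec; lra.
    - unfold Rmin, Rmax in Hcc. destruct Rle_dec; [|lra].
      assert (0 <= df c) by (apply Hp; lra). nra. }
  destruct (Rle_dec (f 0) (f t)) as [|Hl]; auto. exfalso.
  destruct (at_right_0_eps f Hc (f 0 - f t) ltac:(lra)) as [del [Hdel Hb]].
  assert (0 < Rmin (del / 2) t) by (apply Rmin_pos; lra).
  pose proof (Rmin_l (del / 2) t). pose proof (Rmin_r (del / 2) t).
  pose proof (Hb (Rmin (del / 2) t) ltac:(lra)) as Ha. pose proof (Hmid (Rmin (del / 2) t) ltac:(lra)).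
  apply Rabs_lt_between in Ha. lra.
Qed.

Lemma gronwall_lower (f df : R -> R) c T t :
  filterlim f (at_right 0) (locally (f 0)) ->
  (forall s, 0 < s < T -> is_derive f s (df s)) ->
  0 <= t < T -> (forall s, 0 < s <= t -> c * f s <= df s) -> f 0 * exp (c * t) <= f t.
Proof.
  intros Hc Hd Ht Hp.
  assert (Hmono : f 0 * exp (- c * 0) <= f t * exp (- c * t)).
  { apply (nondecreasing_of_derive (fun s => f s * exp (- c * s))
             (fun s => (df s - c * f s) * exp (- c * s)) T t); [| |exact Ht|].
    - assert (He : continuous (fun s => exp (- c * s)) 0).
      { apply (ex_derive_continuous (K:=R_AbsRing) (V:=R_NormedModule)). auto_derive; auto. }
      exact (filterlim_Rmult_fun f _ _ _ Hc (filterlim_at_right_of_continuous _ 0 He)).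
    - intros s Hs.
      assert (He : is_derive (fun s => exp (- c * s)) s (- c * exp (- c * s))).
      { auto_derive; auto. ring. }
      replace ((df s - c * f s) * exp (- c * s)) with (df s * exp (- c * s) + f s * (- c * exp (- c * s)))
        by ring.
      exact (is_derive_mult f _ s _ _ (Hd s Hs) He (fun _ _ => Rmult_comm _ _)).
    - intros s Hs. pose proof (Hp s Hs). pose proof (exp_pos (- c * s)). nra. }
  rewrite Rmult_0_r, exp_0, Rmult_1_r in Hmono.
  apply Rmult_le_compat_r with (r := exp (c * t)) in Hmono; [|left; apply exp_pos].
  rewrite Rmult_assoc, <- exp_plus in Hmono.
  replace (- c * t + c * t) with 0 in Hmono by ring. rewrite exp_0, Rmult_1_r in Hmono. exact Hmono.
Qed.

Lemma gronwall_upper (f df : R -> R) c T t :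
  filterlim f (at_right 0) (locally (f 0)) ->
  (forall s, 0 < s < T -> is_derive f s (df s)) ->
  0 <= t < T -> (forall s, 0 < s <= t -> df s <= - c * f s) -> f t <= f 0 * exp (- c * t).
Proof.
  intros Hc Hd Ht Hp.
  assert (H := gronwall_lower (fun s => - f s) (fun s => - df s) (- c) T t).
  enough (- f 0 * exp (- c * t) <= - f t) by lra.
  apply H; auto.
  - apply (filterlim_comp _ _ _ f Ropp _ _ _ Hc (filterlim_opp (V:=R_NormedModule) (f 0))).
  - intros s Hs. apply (is_derive_opp f s (df s)), Hd; auto.
  - intros s Hs. pose proof (Hp s Hs). lra.
Qed.

Lemma le_of_left_continuous (h : R -> R) t B : 0 < t -> continuity_pt h t ->
  (forall s, 0 <= s < t -> h s <= B) -> h t <= B.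
Proof.
  intros Ht Hc Hb. destruct (Rle_dec (h t) B) as [|Hn]; auto. exfalso.
  destruct (Hc (h t - B) ltac:(lra)) as [del [Hdel Hd]].
  assert (0 < Rmin (del / 2) t) by (apply Rmin_pos; lra).
  pose proof (Rmin_l (del / 2) t). pose proof (Rmin_r (del / 2) t).
  assert (Hs : R_dist (h (t - Rmin (del / 2) t / 2)) (h t) < h t - B).
  { apply Hd. split; [split; [exact I | lra]|]. simpl. unfold R_dist. rewrite Rabs_left; lra. }
  unfold R_dist in Hs. apply Rabs_lt_between in Hs.
  pose proof (Hb (t - Rmin (del / 2) t / 2) ltac:(lra)). lra.
Qed.

(* [tau], the first time at which [L <= h], is obtained as the opposite of the
   least upper bound of the set of opposites of such times. *)
Lemma continuous_induction (h : R -> R) T L :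
  filterlim h (at_right 0) (locally (h 0)) ->
  (forall t, 0 < t < T -> continuity_pt h t) -> h 0 < L ->
  (forall t, 0 < t < T -> (forall s, 0 <= s < t -> h s < L) -> h t < L) ->
  forall t, 0 <= t < T -> h t < L.
Proof.
  intros Hr Hc H0 Hstep t1 Ht1.
  destruct (Rlt_dec (h t1) L) as [|Hge]; auto. exfalso.
  set (E := fun y => 0 <= - y <= t1 /\ L <= h (- y)).
  assert (Hb : bound E) by (exists 0; intros y [Hy _]; lra).
  assert (Hne : exists y, E y) by (exists (- t1); unfold E; rewrite Ropp_involutive; lra).
  destruct (completeness E Hb Hne) as [m [Hub Hlub]].
  set (tau := - m).
  assert (Hlow : forall s, 0 <= s <= t1 -> L <= h s -> tau <= s).
  { intros s Hs Hh. assert (E (- s)) by (unfold E; rewrite Ropp_involutive; lra).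
    pose proof (Hub _ H). unfold tau. lra. }
  assert (Hgl : forall b, (forall s, 0 <= s <= t1 -> L <= h s -> b <= s) -> b <= tau).
  { intros b Hbnd. enough (m <= - b) by (unfold tau; lra).
    apply Hlub. intros y [Hy1 Hy2]. pose proof (Hbnd (- y) Hy1 Hy2). lra. }
  assert (Htau : 0 <= tau <= t1) by (split; [apply Hgl; intros; lra | apply Hlow; lra]).
  destruct (Req_dec tau 0) as [Z|Z].
  - destruct (at_right_0_eps h Hr (L - h 0) ltac:(lra)) as [del [Hdel Hd]].
    enough (del <= tau) by lra.
    apply Hgl. intros s Hs Hh. destruct (Rle_dec del s) as [|Hn]; auto.
    destruct (Req_dec s 0) as [->|]; [lra|].
    pose proof (Hd s ltac:(lra)) as Hds. apply Rabs_lt_between in Hds. lra.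
  - assert (HL : h tau < L).
    { apply Hstep; [lra|]. intros s Hs. destruct (Rlt_dec (h s) L); auto.
      pose proof (Hlow s ltac:(lra) ltac:(lra)). lra. }
    destruct (Hc tau ltac:(lra) (L - h tau) ltac:(lra)) as [del [Hdel Hd]].
    enough (tau + del / 2 <= tau) by lra.
    apply Hgl. intros s Hs Hh. destruct (Rle_dec (tau + del / 2) s) as [|Hn]; auto.
    pose proof (Hlow s Hs Hh). destruct (Req_dec s tau) as [->|]; [lra|].
    assert (Hds : R_dist (h s) (h tau) < L - h tau).
    { apply Hd. split; [split; [exact I | auto]|]. simpl. unfold R_dist. rewrite Rabs_right; lra. }
    unfold R_dist in Hds. apply Rabs_lt_between in Hds. lra.
Qed.

Lemma stays_below (h : R -> R) T B L : B < L -> h 0 < L ->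
  filterlim h (at_right 0) (locally (h 0)) ->
  (forall t, 0 < t < T -> continuity_pt h t) ->
  (forall t, 0 < t < T -> (forall s, 0 <= s < t -> h s < L) -> forall s, 0 <= s < t -> h s <= B) ->
  forall t, 0 <= t < T -> h t < L.
Proof.
  intros HBL H0 Hr Hc Hstep. apply continuous_induction; auto.
  intros t Ht Hbefore. enough (h t <= B) by lra.
  apply le_of_left_continuous; [lra | apply Hc; auto | apply Hstep; auto].
Qed.

Lemma lyapunov_decay (h dh : R -> R) lam L T : 0 <= lam ->
  filterlim h (at_right 0) (locally (h 0)) ->
  (forall s, 0 < s < T -> is_derive h s (dh s)) -> 0 <= h 0 -> h 0 < L ->
  (forall s, 0 < s < T -> h s < L -> dh s <= - lam * h s) ->
  forall t, 0 <= t < T -> h t <= h 0 * exp (- lam * t).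
Proof.
  intros Hlam Hrc Hdh Hh0 HhL Hnear.
  assert (Hbelow : forall s, 0 <= s < T -> h s < L).
  { apply (stays_below h T (h 0) L); auto.
    - intros s Hs. apply (continuity_pt_of_derive _ _ (dh s)), Hdh; auto.
    - intros t Ht Hb s Hs.
      pose proof (gronwall_upper h dh lam T s Hrc Hdh ltac:(lra)
                    (fun r Hr => Hnear r ltac:(lra) (Hb r ltac:(lra)))).
      pose proof (exp_le_mono (- lam * s) 0 ltac:(nra)). rewrite exp_0 in *. nra. }
  intros t Ht. apply (gronwall_upper h dh lam T t Hrc Hdh Ht).
  intros r Hr. apply Hnear; [lra | apply Hbelow; lra].
Qed.

(** * The Picard-Lindelöf theorem *)

Lemma is_lim_seq_abs_le (a b : nat -> R) (la lb B : R) : is_lim_seq a la -> is_lim_seq b lb ->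
  (forall n, Rabs (a n - b n) <= B) -> Rabs (la - lb) <= B.
Proof.
  intros Ha Hb HB.
  assert (Hab := is_lim_seq_abs _ _ (is_lim_seq_minus' _ _ _ _ Ha Hb)).
  exact (is_lim_seq_le _ _ _ _ HB Hab (is_lim_seq_const B)).
Qed.

Lemma eq_0_of_geometric X C : (forall n, Rabs X <= C * (/2) ^ n) -> X = 0.
Proof.
  intros H.
  assert (Hl : is_lim_seq (fun n => C * (/2) ^ n) 0).
  { replace (Finite 0) with (Rbar_mult C 0) by (simpl; f_equal; ring).
    apply is_lim_seq_scal_l. apply is_lim_seq_geom. rewrite Rabs_right; lra. }
  assert (H0 := is_lim_seq_le _ _ _ _ H (is_lim_seq_const (Rabs X)) Hl). simpl in H0.
  destruct (Req_dec X 0) as [|HX]; auto. pose proof (Rabs_pos_lt X HX). lra.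
Qed.

Lemma geometric_tail (a : nat -> R) A : (forall k, Rabs (a (S k) - a k) <= A * (/2) ^ k) ->
  forall n p, Rabs (a (n + p)%nat - a n) <= 2 * A * ((/2) ^ n - (/2) ^ (n + p)).
Proof.
  intros Ha n p. induction p as [|p IH].
  - rewrite Nat.add_0_r, !Rminus_eq_0, Rabs_R0. lra.
  - rewrite Nat.add_succ_r.
    replace (a (S (n + p)) - a n) with ((a (S (n + p)) - a (n + p)%nat) + (a (n + p)%nat - a n)) by ring.
    eapply Rle_trans; [apply Rabs_triang|].
    pose proof (Ha (n + p)%nat). simpl pow. lra.
Qed.

Lemma geometric_lim (a : nat -> R) A : (forall k, Rabs (a (S k) - a k) <= A * (/2) ^ k) ->
  is_lim_seq a (real (Lim_seq a)) /\ forall n, Rabs (Lim_seq a - a n) <= 2 * A * (/2) ^ n.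
Proof.
  intros Ha.
  assert (Htail : forall n p, Rabs (a (n + p)%nat - a n) <= 2 * A * (/2) ^ n).
  { intros n p. pose proof (geometric_tail a A Ha n p). pose proof (pow_le (/2) (n + p) ltac:(lra)).
    assert (0 <= A) by (pose proof (Ha O); pose proof (Rabs_pos (a 1%nat - a O)); simpl in *; lra).
    nra. }
  assert (Hcv : ex_finite_lim_seq a).
  { apply ex_lim_seq_cauchy_corr. intros eps.
    assert (Hy : 0 < eps / (2 * A + 1)).
    { pose proof (Htail O O); pose proof (Rabs_pos (a (0 + 0)%nat - a O)); simpl in *.
      apply Rdiv_lt_0_compat; [apply cond_pos | lra]. }
    destruct (pow_lt_1_zero (/2) ltac:(rewrite Rabs_right; lra) _ Hy) as [N HN].
    assert (Hgen : forall n p, (N <= n)%nat -> Rabs (a (n + p)%nat - a n) < eps).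
    { intros n p Hn. pose proof (HN n Hn) as Hp.
      rewrite Rabs_right in Hp by (apply Rle_ge, pow_le; lra).
      pose proof (Htail O O); pose proof (Rabs_pos (a (0 + 0)%nat - a O)); simpl in *.
      apply Rmult_lt_compat_l with (r := 2 * A + 1) in Hp; [|lra].
      replace ((2 * A + 1) * (eps / (2 * A + 1))) with (pos eps) in Hp by (field; lra).
      pose proof (Htail n p); pose proof (pow_le (/2) n ltac:(lra)). nra. }
    exists N. intros n m Hn Hm. destruct (Nat.le_ge_cases n m) as [Hnm|Hnm].
    - replace m with (n + (m - n))%nat by lia. rewrite Rabs_minus_sym. apply Hgen; auto.
    - replace n with (m + (n - m))%nat by lia. apply Hgen; auto. }
  destruct Hcv as [l Hl]. rewrite (is_lim_seq_unique _ _ Hl). split; auto.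
  intros n. apply (is_lim_seq_abs_le (fun m => a (n + m)%nat) (fun _ => a n)).
  - apply (is_lim_seq_incr_n a n) in Hl.
    eapply is_lim_seq_ext; [|exact Hl]. intros m; simpl. now rewrite Nat.add_comm.
  - apply is_lim_seq_const.
  - intros m. apply Htail.
Qed.

(* Clipping [t] into [0, T] freezes the iterates outside [0, T], so that all of
   them are globally Lipschitz. *)
Definition picard_map (T : R) (G : R -> R -> R) (w : R) (z x : R -> R) (t : R) : R :=
  w + RInt (fun s => G (z s) (x s)) 0 (clip 0 T t).

Section PicardMap.

Variables (T L M : R) (G : R -> R -> R) (w : R).
Hypotheses (HT : 0 <= T) (HL : 0 <= L) (HG : lipschitz2 G L)
  (HGM : forall a b, Rabs (G a b) <= M).

Lemma field_continuous z x : lipschitz z M -> lipschitz x M ->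
  forall s, continuous (fun s => G (z s) (x s)) s.
Proof.
  intros Hz Hx. apply (lipschitz_continuous _ (L * (2 * M))). apply lipschitz2_comp; auto.
Qed.

Lemma picard_map_eq z x t : 0 <= t <= T ->
  picard_map T G w z x t = w + RInt (fun s => G (z s) (x s)) 0 t.
Proof. intros Ht. unfold picard_map. now rewrite clip_id. Qed.

Lemma picard_map_lipschitz z x : lipschitz z M -> lipschitz x M ->
  lipschitz (picard_map T G w z x) M.
Proof.
  intros Hz Hx t t'. unfold picard_map.
  assert (HM : 0 <= M) by (pose proof (HGM 0 0); pose proof (Rabs_pos (G 0 0)); lra).
  set (g := fun s => G (z s) (x s)).
  assert (E : RInt g 0 (clip 0 T t) - RInt g 0 (clip 0 T t') = RInt g (clip 0 T t') (clip 0 T t)).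
  { rewrite <- (RInt_Chasles g 0 (clip 0 T t') (clip 0 T t))
      by (apply ex_RInt_cont, field_continuous; auto).
    change (plus ?a ?b) with (a + b). ring. }
  replace (w + RInt g 0 (clip 0 T t) - (w + RInt g 0 (clip 0 T t')))
    with (RInt g 0 (clip 0 T t) - RInt g 0 (clip 0 T t')) by ring.
  rewrite E.
  eapply Rle_trans.
  { apply (abs_RInt_le_const_swap _ _ _ M); [apply ex_RInt_cont, field_continuous; auto|].
    intros; apply HGM. }
  apply Rmult_le_compat_l; auto. rewrite <- (Rmult_1_l (Rabs (t - t'))). now apply clip_lipschitz.
Qed.

Lemma picard_map_dist_init z x t : lipschitz z M -> lipschitz x M -> 0 <= t <= T ->
  Rabs (picard_map T G w z x t - w) <= M * t.
Proof.
  intros Hz Hx Ht. rewrite picard_map_eq, Rplus_minus_l by auto.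
  rewrite <- (Rminus_0_r t) at 2. rewrite <- (Rabs_right (t - 0)) by lra.
  apply abs_RInt_le_const_swap; auto. apply ex_RInt_cont, field_continuous; auto.
Qed.

Lemma picard_map_contract z x z' x' c lam t : 0 < lam -> 0 <= t <= T ->
  lipschitz z M -> lipschitz x M -> lipschitz z' M -> lipschitz x' M ->
  (forall s, 0 <= s <= t -> Rabs (z s - z' s) + Rabs (x s - x' s) <= c * exp (lam * s)) ->
  Rabs (picard_map T G w z x t - picard_map T G w z' x' t) <= L * c * exp (lam * t) / lam.
Proof.
  intros Hlam Ht Hz Hx Hz' Hx' Hc. rewrite !picard_map_eq by auto.
  replace (w + RInt (fun s => G (z s) (x s)) 0 t - (w + RInt (fun s => G (z' s) (x' s)) 0 t))
    with (RInt (fun s => G (z s) (x s)) 0 t - RInt (fun s => G (z' s) (x' s)) 0 t) by ring.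
  rewrite RInt_minus_cont by (apply field_continuous; auto).
  apply (abs_RInt_le_exp _ (L * c)); auto; [lra| |].
  - intros s. apply (continuous_minus (V:=R_NormedModule)); apply field_continuous; auto.
  - intros s Hs. rewrite Rmult_assoc. eapply Rle_trans; [apply HG|].
    apply Rmult_le_compat_l; auto.
Qed.

Lemma picard_map_derive z x t : lipschitz z M -> lipschitz x M -> 0 < t < T ->
  is_derive (picard_map T G w z x) t (G (z t) (x t)).
Proof.
  intros Hz Hx Ht.
  apply (is_derive_ext_loc (fun s => w + RInt (fun s => G (z s) (x s)) 0 s)).
  - apply (locally_of_interval _ t 0 T Ht). intros s Hs. symmetry. apply picard_map_eq. lra.
  - apply (is_derive_RInt_cont (fun s => G (z s) (x s))), field_continuous; auto.
Qed.

End PicardMap.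

Section PicardLindelof.

Variables (G1 G2 : R -> R -> R) (L M T z0 x0 : R).
Hypotheses (HL : 0 <= L) (HT : 0 < T) (HG1 : lipschitz2 G1 L) (HG2 : lipschitz2 G2 L)
  (HB1 : forall a b, Rabs (G1 a b) <= M) (HB2 : forall a b, Rabs (G2 a b) <= M).

Fixpoint picard_iter (n : nat) : (R -> R) * (R -> R) :=
  match n with
  | O => (fun _ => z0, fun _ => x0)
  | S n => let zx := picard_iter n in
      (picard_map T G1 z0 (fst zx) (snd zx), picard_map T G2 x0 (fst zx) (snd zx))
  end.

Let HM : 0 <= M.
Proof. pose proof (HB1 0 0); pose proof (Rabs_pos (G1 0 0)); lra. Qed.

Lemma picard_iter_lipschitz n :
  lipschitz (fst (picard_iter n)) M /\ lipschitz (snd (picard_iter n)) M.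
Proof.
  induction n as [|n [IHz IHx]]; simpl.
  - split; intros t t'; rewrite Rminus_eq_0, Rabs_R0;
      pose proof (Rabs_pos (t - t')); nra.
  - split; apply picard_map_lipschitz with L; auto; lra.
Qed.

(* A Bielecki-type weighted estimate: the weight [exp ((4 L + 1) t)] makes every
   Picard step a contraction by a factor 1/2, however long the interval. *)
Lemma picard_iter_step n t : 0 <= t <= T ->
  Rabs (fst (picard_iter (S n)) t - fst (picard_iter n) t) +
  Rabs (snd (picard_iter (S n)) t - snd (picard_iter n) t)
  <= 2 * M * T * (/2) ^ n * exp ((4 * L + 1) * t).
Proof.
  revert t. induction n as [|n IH]; intros t Ht.
  - destruct (picard_iter_lipschitz 0) as [Hz Hx]. simpl in Hz, Hx |- *.
    pose proof (picard_map_dist_init T L M G1 z0 HL HG1 HB1 _ _ t Hz Hx Ht).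
    pose proof (picard_map_dist_init T L M G2 x0 HL HG2 HB2 _ _ t Hz Hx Ht).
    pose proof (exp_ineq1_le ((4 * L + 1) * t)).
    assert (0 <= (4 * L + 1) * t) by nra.
    assert (M * t <= M * T) by (apply Rmult_le_compat_l; lra).
    assert (0 <= M * T * (exp ((4 * L + 1) * t) - 1)) by (apply Rmult_le_pos; nra).
    lra.
  - destruct (picard_iter_lipschitz (S n)) as [Hz1 Hx1].
    destruct (picard_iter_lipschitz n) as [Hz Hx].
    set (c := 2 * M * T * (/ 2) ^ n).
    assert (Hc : 0 <= c) by (apply Rmult_le_pos; [nra | apply pow_le; lra]).
    assert (IH' : forall s, 0 <= s <= t ->
      Rabs (fst (picard_iter (S n)) s - fst (picard_iter n) s) +
      Rabs (snd (picard_iter (S n)) s - snd (picard_iter n) s) <= c * exp ((4 * L + 1) * s))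
      by (intros s Hs; apply IH; lra).
    pose proof (picard_map_contract T L M G1 z0 HL HG1 _ _ _ _ c (4 * L + 1) t
                  ltac:(lra) Ht Hz1 Hx1 Hz Hx IH') as E1.
    pose proof (picard_map_contract T L M G2 x0 HL HG2 _ _ _ _ c (4 * L + 1) t
                  ltac:(lra) Ht Hz1 Hx1 Hz Hx IH') as E2.
    simpl in E1, E2 |- *.
    replace (2 * M * T * (/ 2 * (/ 2) ^ n)) with (c * / 2) by (unfold c; ring).
    assert (Hw : 2 * (L * c * exp ((4 * L + 1) * t) / (4 * L + 1))
                 <= c * / 2 * exp ((4 * L + 1) * t)).
    { pose proof (exp_pos ((4 * L + 1) * t)).
      apply Rmult_le_reg_r with (4 * L + 1); [lra|].
      unfold Rdiv. field_simplify; [|lra]. nra. }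
    lra.
Qed.

Let A := 2 * M * T * exp ((4 * L + 1) * T).

Let HA : 0 <= A.
Proof. unfold A. pose proof (exp_pos ((4 * L + 1) * T)). apply Rmult_le_pos; [nra | lra]. Qed.

Lemma picard_iter_step_uniform n t : 0 <= t <= T ->
  Rabs (fst (picard_iter (S n)) t - fst (picard_iter n) t) +
  Rabs (snd (picard_iter (S n)) t - snd (picard_iter n) t) <= A * (/2) ^ n.
Proof.
  intros Ht. eapply Rle_trans; [apply picard_iter_step; auto|]. unfold A.
  assert (exp ((4 * L + 1) * t) <= exp ((4 * L + 1) * T)) by (apply exp_le_mono; nra).
  assert (0 <= 2 * M * T * (/ 2) ^ n) by (apply Rmult_le_pos; [nra | apply pow_le; lra]).
  nra.
Qed.

Definition picard_z (t : R) : R := Lim_seq (fun n => fst (picard_iter n) (clip 0 T t)).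
Definition picard_x (t : R) : R := Lim_seq (fun n => snd (picard_iter n) (clip 0 T t)).

Lemma picard_z_lim t : is_lim_seq (fun n => fst (picard_iter n) (clip 0 T t)) (picard_z t) /\
  forall n, Rabs (picard_z t - fst (picard_iter n) (clip 0 T t)) <= 2 * A * (/2) ^ n.
Proof.
  apply geometric_lim. intros k. pose proof (clip_in 0 T t ltac:(lra)).
  pose proof (picard_iter_step_uniform k (clip 0 T t) ltac:(lra)).
  pose proof (Rabs_pos (snd (picard_iter (S k)) (clip 0 T t) - snd (picard_iter k) (clip 0 T t))).
  lra.
Qed.

Lemma picard_x_lim t : is_lim_seq (fun n => snd (picard_iter n) (clip 0 T t)) (picard_x t) /\
  forall n, Rabs (picard_x t - snd (picard_iter n) (clip 0 T t)) <= 2 * A * (/2) ^ n.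
Proof.
  apply geometric_lim. intros k. pose proof (clip_in 0 T t ltac:(lra)).
  pose proof (picard_iter_step_uniform k (clip 0 T t) ltac:(lra)).
  pose proof (Rabs_pos (fst (picard_iter (S k)) (clip 0 T t) - fst (picard_iter k) (clip 0 T t))).
  lra.
Qed.

Lemma picard_lim_lipschitz : lipschitz picard_z M /\ lipschitz picard_x M.
Proof.
  split; intros t t'.
  - apply (is_lim_seq_abs_le _ _ _ _ _ (proj1 (picard_z_lim t)) (proj1 (picard_z_lim t'))).
    intros n. eapply Rle_trans; [apply picard_iter_lipschitz|].
    apply Rmult_le_compat_l; auto. rewrite <- (Rmult_1_l (Rabs (t - t'))). apply clip_lipschitz; lra.
  - apply (is_lim_seq_abs_le _ _ _ _ _ (proj1 (picard_x_lim t)) (proj1 (picard_x_lim t'))).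
    intros n. eapply Rle_trans; [apply picard_iter_lipschitz|].
    apply Rmult_le_compat_l; auto. rewrite <- (Rmult_1_l (Rabs (t - t'))). apply clip_lipschitz; lra.
Qed.

Lemma picard_lim_fixed G w v : lipschitz2 G L ->
  (forall n t, 0 <= t <= T ->
     Rabs (v t - picard_map T G w (fst (picard_iter n)) (snd (picard_iter n)) t) <= 2 * A * (/2) ^ n) ->
  forall t, 0 <= t <= T -> v t = picard_map T G w picard_z picard_x t.
Proof.
  intros HG Hv t Ht. apply Rminus_diag_uniq.
  apply (eq_0_of_geometric _ (2 * A + L * (4 * A) * exp t)). intros n.
  destruct (picard_iter_lipschitz n) as [Hz Hx]. destruct picard_lim_lipschitz as [Hz' Hx'].
  assert (Hclose : forall s, 0 <= s <= t ->
    Rabs (fst (picard_iter n) s - picard_z s) + Rabs (snd (picard_iter n) s - picard_x s)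
      <= 4 * A * (/2) ^ n * exp (1 * s)).
  { intros s Hs. pose proof (proj2 (picard_z_lim s) n). pose proof (proj2 (picard_x_lim s) n).
    rewrite clip_id in * by lra. rewrite Rabs_minus_sym, (Rabs_minus_sym (snd _ s)).
    pose proof (exp_ineq1_le (1 * s)). pose proof (pow_le (/2) n ltac:(lra)).
    assert (0 <= A * (/ 2) ^ n * (exp (1 * s) - 1)) by (apply Rmult_le_pos; nra). nra. }
  pose proof (picard_map_contract T L M G w HL HG _ _ _ _ _ 1 t Rlt_0_1 Ht Hz Hx Hz' Hx' Hclose).
  pose proof (Hv n t Ht).
  replace (v t - picard_map T G w picard_z picard_x t) with
    ((v t - picard_map T G w (fst (picard_iter n)) (snd (picard_iter n)) t) +
     (picard_map T G w (fst (picard_iter n)) (snd (picard_iter n)) t - picard_map T G w picard_z picard_x t))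
    by ring.
  eapply Rle_trans; [apply Rabs_triang|]. rewrite Rmult_1_l, Rdiv_1_r in *. nra.
Qed.

Theorem picard_lindelof : exists zt xt : R -> R, zt 0 = z0 /\ xt 0 = x0 /\
  (forall t, continuous zt t /\ continuous xt t) /\
  (forall t, 0 < t < T -> is_derive zt t (G1 (zt t) (xt t)) /\ is_derive xt t (G2 (zt t) (xt t))).
Proof.
  destruct picard_lim_lipschitz as [Hz Hx].
  assert (Hstep : forall n, 2 * A * (/2) ^ S n <= 2 * A * (/2) ^ n).
  { intros n. pose proof (pow_le (/2) n ltac:(lra)). simpl. nra. }
  assert (Fz : forall t, 0 <= t <= T -> picard_z t = picard_map T G1 z0 picard_z picard_x t).
  { apply (picard_lim_fixed G1 z0 picard_z HG1). intros n t Ht.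
    pose proof (proj2 (picard_z_lim t) (S n)) as Hn. rewrite clip_id in Hn by auto.
    eapply Rle_trans; [exact Hn | apply Hstep]. }
  assert (Fx : forall t, 0 <= t <= T -> picard_x t = picard_map T G2 x0 picard_z picard_x t).
  { apply (picard_lim_fixed G2 x0 picard_x HG2). intros n t Ht.
    pose proof (proj2 (picard_x_lim t) (S n)) as Hn. rewrite clip_id in Hn by auto.
    eapply Rle_trans; [exact Hn | apply Hstep]. }
  exists picard_z, picard_x. split; [|split; [|split]].
  - rewrite Fz, picard_map_eq, RInt_point by lra. apply Rplus_0_r.
  - rewrite Fx, picard_map_eq, RInt_point by lra. apply Rplus_0_r.
  - intros t. split; eapply lipschitz_continuous; eauto.
  - intros t Ht. split.
    + apply (is_derive_ext_loc (picard_map T G1 z0 picard_z picard_x)).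
      * apply (locally_of_interval _ t 0 T Ht). intros s Hs. symmetry. apply Fz. lra.
      * apply (picard_map_derive T L M); auto.
    + apply (is_derive_ext_loc (picard_map T G2 x0 picard_z picard_x)).
      * apply (locally_of_interval _ t 0 T Ht). intros s Hs. symmetry. apply Fx. lra.
      * apply (picard_map_derive T L M); auto.
Qed.

End PicardLindelof.

Definition bounded_lipschitz_on1 (r : R) (h : R -> R) : Prop :=
  exists L B, 0 <= L /\ 0 <= B /\ forall a a', Rabs a <= r -> Rabs a' <= r ->
    Rabs (h a) <= B /\ Rabs (h a - h a') <= L * Rabs (a - a').

Definition bounded_lipschitz_on2 (r : R) (f : R -> R -> R) : Prop :=
  exists L B, 0 <= L /\ 0 <= B /\ forall a b a' b', Rabs a <= r -> Rabs b <= r ->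
    Rabs a' <= r -> Rabs b' <= r ->
    Rabs (f a b) <= B /\ Rabs (f a b - f a' b') <= L * (Rabs (a - a') + Rabs (b - b')).

Lemma bounded_lipschitz_on1_of_C1 (h h' : R -> R) r : 0 <= r ->
  (forall x, is_derive h x (h' x)) -> (forall x, continuous h' x) -> bounded_lipschitz_on1 r h.
Proof.
  intros Hr Hd Hc.
  destruct (continuity_ab_maj (fun x => Rabs (h' x)) (- r) r) as [xm [Hmax _]]; [lra| |].
  { intros x _. apply continuity_pt_filterlim, continuous_Rabs_comp, Hc. }
  set (K := Rabs (h' xm)).
  assert (Hlip : forall a b, Rabs a <= r -> Rabs b <= r -> Rabs (h a - h b) <= K * Rabs (a - b)).
  { intros a b Ha Hb. apply Rabs_le_between in Ha, Hb.
    destruct (MVT_gen h b a h') as [c [Hcab Heq]].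
    - intros x _. apply Hd.
    - intros x _. apply continuity_pt_filterlim, (ex_derive_continuous (V:=R_NormedModule)).
      eexists; apply Hd.
    - rewrite Heq, Rabs_mult, (Rabs_minus_sym a b). apply Rmult_le_compat_r; [apply Rabs_pos|].
      apply Hmax. unfold Rmin, Rmax in Hcab. destruct Rle_dec; lra. }
  exists K, (Rabs (h 0) + K * r).
  assert (HK : 0 <= K) by apply Rabs_pos. pose proof (Rabs_pos (h 0)).
  split; [lra|]. split; [nra|].
  intros a a' Ha Ha'. split; [|now apply Hlip].
  assert (Hr0 : Rabs 0 <= r) by (rewrite Rabs_R0; lra).
  pose proof (Hlip a 0 Ha Hr0) as Ha0. rewrite Rminus_0_r in Ha0.
  pose proof (Rabs_triang_inv (h a) (h 0)). nra.
Qed.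

Lemma bounded_lipschitz_on2_const r c : bounded_lipschitz_on2 r (fun _ _ => c).
Proof.
  exists 0, (Rabs c). split; [lra|]. split; [apply Rabs_pos|].
  intros. rewrite Rminus_eq_0, Rabs_R0, Rmult_0_l. split; lra.
Qed.

Lemma bounded_lipschitz_on2_fst r : 0 <= r -> bounded_lipschitz_on2 r (fun a _ => a).
Proof.
  intros Hr. exists 1, r. do 2 (split; [lra|]).
  intros. split; auto. pose proof (Rabs_pos (b - b')). lra.
Qed.

Lemma bounded_lipschitz_on2_snd r : 0 <= r -> bounded_lipschitz_on2 r (fun _ b => b).
Proof.
  intros Hr. exists 1, r. do 2 (split; [lra|]).
  intros. split; auto. pose proof (Rabs_pos (a - a')). lra.
Qed.

Lemma bounded_lipschitz_on2_comp1 r h : bounded_lipschitz_on1 r h ->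
  bounded_lipschitz_on2 r (fun a _ => h a).
Proof.
  intros [L [B [HL [HB H]]]]. exists L, B. do 2 (split; auto).
  intros a b a' b' Ha Hb Ha' Hb'. destruct (H a a' Ha Ha') as [H1 H2].
  split; auto. pose proof (Rabs_pos (b - b')). nra.
Qed.

Lemma bounded_lipschitz_on2_plus r f g : bounded_lipschitz_on2 r f -> bounded_lipschitz_on2 r g ->
  bounded_lipschitz_on2 r (fun a b => f a b + g a b).
Proof.
  intros [L1 [B1 [HL1 [HB1 H1]]]] [L2 [B2 [HL2 [HB2 H2]]]].
  exists (L1 + L2), (B1 + B2). split; [lra|]. split; [lra|].
  intros a b a' b' Ha Hb Ha' Hb'.
  destruct (H1 a b a' b' Ha Hb Ha' Hb') as [F1 F2], (H2 a b a' b' Ha Hb Ha' Hb') as [G1 G2].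
  split.
  - eapply Rle_trans; [apply Rabs_triang | lra].
  - replace (f a b + g a b - (f a' b' + g a' b')) with ((f a b - f a' b') + (g a b - g a' b')) by ring.
    eapply Rle_trans; [apply Rabs_triang | lra].
Qed.

Lemma bounded_lipschitz_on2_opp r f : bounded_lipschitz_on2 r f ->
  bounded_lipschitz_on2 r (fun a b => - f a b).
Proof.
  intros [L [B [HL [HB H]]]]. exists L, B. do 2 (split; auto).
  intros a b a' b' Ha Hb Ha' Hb'. destruct (H a b a' b' Ha Hb Ha' Hb') as [F1 F2].
  replace (- f a b - - f a' b') with (- (f a b - f a' b')) by ring. rewrite !Rabs_Ropp. auto.
Qed.

Lemma bounded_lipschitz_on2_minus r f g : bounded_lipschitz_on2 r f -> bounded_lipschitz_on2 r g ->
  bounded_lipschitz_on2 r (fun a b => f a b - g a b).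
Proof.
  intros Hf Hg. apply (bounded_lipschitz_on2_plus r f (fun a b => - g a b)); auto.
  now apply bounded_lipschitz_on2_opp.
Qed.

Lemma bounded_lipschitz_on2_mult r f g : bounded_lipschitz_on2 r f -> bounded_lipschitz_on2 r g ->
  bounded_lipschitz_on2 r (fun a b => f a b * g a b).
Proof.
  intros [L1 [B1 [HL1 [HB1 H1]]]] [L2 [B2 [HL2 [HB2 H2]]]].
  exists (B1 * L2 + B2 * L1), (B1 * B2). split; [nra|]. split; [nra|].
  intros a b a' b' Ha Hb Ha' Hb'.
  destruct (H1 a b a' b' Ha Hb Ha' Hb') as [F1 F2], (H2 a b a' b' Ha Hb Ha' Hb') as [G1 G2].
  destruct (H2 a' b' a b Ha' Hb' Ha Hb) as [G1' _].
  split.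
  - rewrite Rabs_mult. apply Rmult_le_compat; auto; apply Rabs_pos.
  - replace (f a b * g a b - f a' b' * g a' b') with
      (f a b * (g a b - g a' b') + g a' b' * (f a b - f a' b')) by ring.
    eapply Rle_trans; [apply Rabs_triang|]. rewrite !Rabs_mult.
    set (D := Rabs (a - a') + Rabs (b - b')).
    assert (Rabs (f a b) * Rabs (g a b - g a' b') <= B1 * (L2 * D))
      by (apply Rmult_le_compat; auto; apply Rabs_pos).
    assert (Rabs (g a' b') * Rabs (f a b - f a' b') <= B2 * (L1 * D))
      by (apply Rmult_le_compat; auto; apply Rabs_pos).
    nra.
Qed.

Lemma bounded_lipschitz_on2_clip r f : 0 <= r -> bounded_lipschitz_on2 r f ->
  exists L M, 0 <= L /\ lipschitz2 (fun a b => f (clip (- r) r a) (clip (- r) r b)) L /\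
    forall a b, Rabs (f (clip (- r) r a) (clip (- r) r b)) <= M.
Proof.
  intros Hr [L [B [HL [HB H]]]].
  assert (Hin : forall y, Rabs (clip (- r) r y) <= r)
    by (intros y; apply Rabs_le, clip_in; lra).
  exists L, B. split; auto. split.
  - intros a b a' b'.
    destruct (H (clip (- r) r a) (clip (- r) r b) (clip (- r) r a') (clip (- r) r b')) as [_ Hl];
      auto.
    eapply Rle_trans; [exact Hl|]. apply Rmult_le_compat_l; auto.
    pose proof (clip_lipschitz (- r) r ltac:(lra) a a').
    pose proof (clip_lipschitz (- r) r ltac:(lra) b b'). lra.
  - intros a b. now destruct (H (clip (- r) r a) (clip (- r) r b) (clip (- r) r a) (clip (- r) r b)).
Qed.

(** * The vector field near the origin *)

Lemma is_derive_eta s z : 0 < s -> is_derive (eta s) z (- z / s ^ 2 * eta s z).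
Proof.
  intros Hs. unfold eta. auto_derive; auto.
  match goal with |- _ * exp ?a = _ => replace a with (- z ^ 2 / (2 * s ^ 2)) by (field; lra) end.
  field; lra.
Qed.

Lemma one_sub_eta_bounds s z : 0 < s -> 0 <= 1 - eta s z <= z ^ 2 / (2 * s ^ 2).
Proof.
  intros Hs. unfold eta.
  assert (Hq : 0 <= z ^ 2 / (2 * s ^ 2)) by (apply Rdiv_le_0_compat; nra).
  pose proof (exp_ineq1_le (- z ^ 2 / (2 * s ^ 2))).
  assert (exp (- z ^ 2 / (2 * s ^ 2)) <= exp 0).
  { apply exp_le_mono. unfold Rdiv in *. lra. }
  rewrite exp_0 in *. unfold Rdiv in *. lra.
Qed.

Lemma is_derive_tanh_mul k z :
  is_derive (fun z => tanh (k * z)) z (k * 4 / (exp (k * z) + exp (- (k * z))) ^ 2).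
Proof.
  unfold tanh, sinh, cosh.
  pose proof (exp_pos (k * z)). pose proof (exp_pos (- (k * z))).
  assert (Hinv : exp (k * z) * exp (- (k * z)) = 1) by (rewrite <- exp_plus, Rplus_opp_r; apply exp_0).
  auto_derive; [lra|].
  field_simplify; [|lra ..].
  set (E := exp (k * z)) in *. set (F := exp (- (k * z))) in *.
  replace (16 * k * E * F) with (16 * k * (E * F)) by ring. rewrite Hinv.
  field. split; nra.
Qed.

Lemma tanh_abs_le_1 y : Rabs (tanh y) <= 1.
Proof.
  unfold tanh, sinh, cosh.
  pose proof (exp_pos y). pose proof (exp_pos (- y)).
  rewrite Rabs_div, (Rabs_right ((exp y + exp (- y)) / 2)) by lra.
  apply Rmult_le_reg_r with ((exp y + exp (- y)) / 2); [lra|].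
  unfold Rdiv at 1. rewrite Rmult_assoc, Rinv_l, Rmult_1_r by lra.
  apply Rabs_le; lra.
Qed.

Section FieldLipschitz.

Variables (d u b Kz Kx k sigma l rho r : R) (S : R -> R).
Hypotheses (Hsigma : 0 < sigma) (Hr : 0 <= r) (HS : smooth S).

Lemma bounded_lipschitz_on1_eta : bounded_lipschitz_on1 r (eta sigma).
Proof.
  apply (bounded_lipschitz_on1_of_C1 _ (fun z => - z / sigma ^ 2 * eta sigma z)); auto.
  - intros; now apply is_derive_eta.
  - intros z. apply (ex_derive_continuous (V:=R_NormedModule)). unfold eta. auto_derive; auto; nra.
Qed.

Lemma bounded_lipschitz_on1_tanh_mul : bounded_lipschitz_on1 r (fun z => tanh (k * z)).
Proof.
  apply (bounded_lipschitz_on1_of_C1 _ _ r Hr (is_derive_tanh_mul k)).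
  intros z. apply (ex_derive_continuous (V:=R_NormedModule)).
  pose proof (exp_pos (k * z)). pose proof (exp_pos (- (k * z))). auto_derive; nra.
Qed.

Lemma bounded_lipschitz_on1_smooth : bounded_lipschitz_on1 r S.
Proof.
  apply (bounded_lipschitz_on1_of_C1 _ (Derive S)); auto.
  - intros x. apply Derive_correct, (HS 0%nat).
  - intros x. apply (ex_derive_continuous (V:=R_NormedModule)), (HS 1%nat).
Qed.

Lemma bounded_lipschitz_on2_fz : bounded_lipschitz_on2 r (fz d u b Kz sigma S).
Proof.
  pose proof bounded_lipschitz_on2_const as Hc.
  pose proof (bounded_lipschitz_on2_fst r Hr) as H1.
  pose proof (bounded_lipschitz_on2_snd r Hr) as H2.
  unfold fz.
  apply bounded_lipschitz_on2_minus; [apply bounded_lipschitz_on2_plus;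
    [apply bounded_lipschitz_on2_plus|]|]; repeat apply bounded_lipschitz_on2_mult; auto.
  - apply bounded_lipschitz_on2_comp1, bounded_lipschitz_on1_smooth.
  - apply bounded_lipschitz_on2_comp1, bounded_lipschitz_on1_eta.
  - now apply bounded_lipschitz_on2_minus.
Qed.

Lemma bounded_lipschitz_on2_fx : bounded_lipschitz_on2 r (fx Kx k sigma l rho).
Proof.
  pose proof bounded_lipschitz_on2_const as Hc.
  pose proof (bounded_lipschitz_on2_fst r Hr) as H1.
  pose proof (bounded_lipschitz_on2_snd r Hr) as H2.
  pose proof (bounded_lipschitz_on2_comp1 _ _ bounded_lipschitz_on1_eta) as He.
  unfold fx.
  apply bounded_lipschitz_on2_minus; repeat apply bounded_lipschitz_on2_mult; auto;
    apply bounded_lipschitz_on2_minus; auto.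
  apply bounded_lipschitz_on2_mult; auto.
  apply bounded_lipschitz_on2_comp1, bounded_lipschitz_on1_tanh_mul.
Qed.

End FieldLipschitz.

Lemma is_derive_first_order (f : R -> R) l : is_derive f 0 l ->
  forall eps, 0 < eps -> exists del, 0 < del /\
    forall z, Rabs z < del -> Rabs (f z - f 0 - l * z) <= eps * Rabs z.
Proof.
  intros Hd eps Heps. apply is_derive_Reals in Hd.
  destruct (Hd eps Heps) as [del Hdel]. exists del. split; [apply cond_pos|].
  intros z Hz. destruct (Req_dec z 0) as [->|Hz0].
  - rewrite Rabs_R0, !Rmult_0_r, Rminus_eq_0, Rminus_0_r, Rabs_R0. lra.
  - pose proof (Hdel z Hz0 Hz) as Hq. rewrite Rplus_0_l in Hq.
    replace (f z - f 0 - l * z) with (z * ((f z - f 0) / z - l)) by (field; auto).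
    rewrite Rabs_mult, Rmult_comm. apply Rmult_le_compat_r; [apply Rabs_pos | lra].
Qed.

Lemma one_sub_eta_small s : 0 < s ->
  forall eps, 0 < eps -> exists del, 0 < del /\
    forall z, Rabs z < del -> 1 - eta s z <= eps * Rabs z.
Proof.
  intros Hs eps Heps. exists (2 * s ^ 2 * eps). split; [apply Rmult_lt_0_compat; [nra | lra]|].
  intros z Hz. pose proof (one_sub_eta_bounds s z Hs) as [_ Hle].
  eapply Rle_trans; [exact Hle|].
  rewrite <- Rsqr_pow2, Rsqr_abs. unfold Rsqr.
  apply Rmult_le_reg_r with (2 * s ^ 2); [nra|].
  unfold Rdiv. rewrite Rmult_assoc, Rinv_l by nra.
  pose proof (Rabs_pos z). nra.
Qed.

Lemma field_remainder_le d u Kz Kx k sigma l rho (S : R -> R) z x : 0 < sigma ->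
  Rabs z <= 1 -> Rabs x <= 1 ->
  Rabs (fz d u 0 Kz sigma S z x - ((u - d - Kz) * z + Kz * x)) +
  Rabs (fx Kx k sigma l rho z x - (z - x))
  <= Rabs u * Rabs (S z - z) + (1 - eta sigma z) * (2 * Rabs Kz + Rabs Kx * (Rabs (rho / l) + 1) + 2).
Proof.
  intros Hs Hz Hx.
  pose proof (one_sub_eta_bounds sigma z Hs) as [He _].
  set (e := 1 - eta sigma z) in *. set (c := rho / l).
  unfold fz, fx. replace (eta sigma z) with (1 - e) by (unfold e; ring). fold c.
  replace (- d * z + u * S z + 0 - Kz * (1 - e) * (z - x) - ((u - d - Kz) * z + Kz * x))
    with (u * (S z - z) + Kz * e * (z - x)) by ring.
  replace ((1 - (1 - e)) * Kx * (c * tanh (k * z) - x) - (1 - e) * (x - z) - (z - x))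
    with (e * (Kx * (c * tanh (k * z) - x) + (x - z))) by ring.
  pose proof (tanh_abs_le_1 (k * z)). pose proof (Rabs_pos Kz). pose proof (Rabs_pos Kx).
  pose proof (Rabs_pos c).
  assert (Hzx : Rabs (z - x) <= 2).
  { eapply Rle_trans; [unfold Rminus; apply Rabs_triang|]. rewrite Rabs_Ropp; lra. }
  assert (Hxz : Rabs (x - z) <= 2) by (rewrite Rabs_minus_sym; exact Hzx).
  assert (Htx : Rabs (c * tanh (k * z) - x) <= Rabs c + 1).
  { eapply Rle_trans; [unfold Rminus; apply Rabs_triang|]. rewrite Rabs_Ropp, Rabs_mult. nra. }
  assert (Rabs (u * (S z - z) + Kz * e * (z - x)) <= Rabs u * Rabs (S z - z) + e * (2 * Rabs Kz)).
  { eapply Rle_trans; [apply Rabs_triang|]. rewrite !Rabs_mult, (Rabs_right e) by lra.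
    assert (0 <= Rabs Kz * e) by nra. nra. }
  assert (Rabs (e * (Kx * (c * tanh (k * z) - x) + (x - z))) <= e * (Rabs Kx * (Rabs c + 1) + 2)).
  { rewrite Rabs_mult, (Rabs_right e) by lra. apply Rmult_le_compat_l; [lra|].
    eapply Rle_trans; [apply Rabs_triang|]. rewrite Rabs_mult. nra. }
  lra.
Qed.

Lemma field_linearization d u Kz Kx k sigma l rho (S : R -> R) :
  0 < sigma -> S 0 = 0 -> is_derive S 0 1 ->
  forall eps, 0 < eps -> exists del, 0 < del /\ forall z x, Rabs z < del -> Rabs x < del ->
    Rabs (fz d u 0 Kz sigma S z x - ((u - d - Kz) * z + Kz * x)) +
    Rabs (fx Kx k sigma l rho z x - (z - x)) <= eps * (Rabs z + Rabs x).
Proof.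
  intros Hs HS0 HS1 eps Heps.
  set (K := 2 * Rabs Kz + Rabs Kx * (Rabs (rho / l) + 1) + 2).
  assert (HK : 0 <= K) by (unfold K; pose proof (Rabs_pos Kz); pose proof (Rabs_pos Kx);
                           pose proof (Rabs_pos (rho / l)); nra).
  pose proof (Rabs_pos u).
  destruct (is_derive_first_order S 1 HS1 (eps / (2 * (Rabs u + 1)))) as [d1 [Hd1 HSz]].
  { apply Rdiv_lt_0_compat; lra. }
  destruct (one_sub_eta_small sigma Hs (eps / (2 * (K + 1)))) as [d2 [Hd2 Hez]].
  { apply Rdiv_lt_0_compat; lra. }
  exists (Rmin 1 (Rmin d1 d2)). split; [apply Rmin_pos; [lra | apply Rmin_pos; lra]|].
  intros z x Hz Hx.
  pose proof (Rmin_l 1 (Rmin d1 d2)). pose proof (Rmin_r 1 (Rmin d1 d2)).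
  pose proof (Rmin_l d1 d2). pose proof (Rmin_r d1 d2).
  eapply Rle_trans; [apply field_remainder_le; lra|]. fold K.
  pose proof (HSz z ltac:(lra)) as HSlin. rewrite HS0, Rminus_0_r, Rmult_1_l in HSlin.
  pose proof (Hez z ltac:(lra)). pose proof (Rabs_pos z). pose proof (Rabs_pos x).
  assert (Rabs u * Rabs (S z - z) <= eps / 2 * Rabs z * (Rabs u / (Rabs u + 1))).
  { replace (eps / 2 * Rabs z * (Rabs u / (Rabs u + 1)))
      with (Rabs u * (eps / (2 * (Rabs u + 1)) * Rabs z)) by (field; lra).
    apply Rmult_le_compat_l; lra. }
  assert ((1 - eta sigma z) * K <= eps / 2 * Rabs z * (K / (K + 1))).
  { replace (eps / 2 * Rabs z * (K / (K + 1))) with (eps / (2 * (K + 1)) * Rabs z * K) by (field; lra).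
    apply Rmult_le_compat_r; lra. }
  pose proof (div_succ_le_1 (Rabs u) ltac:(lra)). pose proof (div_succ_le_1 K HK).
  assert (0 <= eps / 2 * Rabs z) by (apply Rmult_le_pos; lra).
  nra.
Qed.

(** * Quadratic Lyapunov and Chetaev functions *)

Definition quad (p q r z x : R) : R := p * z * z + q * z * x + r * x * x.

Definition quad_deriv (p q r z x dz dx : R) : R := (2 * p * z + q * x) * dz + (q * z + 2 * r * x) * dx.

Lemma is_derive_quad p q r (zt xt : R -> R) t dz dx : is_derive zt t dz -> is_derive xt t dx ->
  is_derive (fun t => quad p q r (zt t) (xt t)) t (quad_deriv p q r (zt t) (xt t) dz dx).
Proof.
  intros Hz Hx. unfold quad, quad_deriv.
  auto_derive; [repeat split; eexists; eauto|].
  replace (Derive (fun y => zt y) t) with dz by (symmetry; now apply is_derive_unique).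
  replace (Derive (fun y => xt y) t) with dx by (symmetry; now apply is_derive_unique). ring.
Qed.

Lemma filterlim_quad {F} {FF : Filter F} p q r (zt xt : R -> R) z0 x0 :
  filterlim zt F (locally z0) -> filterlim xt F (locally x0) ->
  filterlim (fun t => quad p q r (zt t) (xt t)) F (locally (quad p q r z0 x0)).
Proof.
  intros Hz Hx. unfold quad.
  repeat first [apply filterlim_Rplus_fun | apply filterlim_Rmult_fun | apply filterlim_const];
    auto.
Qed.

Lemma quad_deriv_small p q r z x r1 r2 eps : 0 <= eps ->
  Rabs r1 + Rabs r2 <= eps * (Rabs z + Rabs x) ->
  Rabs (quad_deriv p q r z x r1 r2) <= 4 * (Rabs p + Rabs q + Rabs r) * eps * (z ^ 2 + x ^ 2).
Proof.
  intros Heps Hr. unfold quad_deriv.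
  pose proof (Rabs_pos p). pose proof (Rabs_pos q). pose proof (Rabs_pos r).
  pose proof (Rabs_pos z). pose proof (Rabs_pos x). pose proof (Rabs_pos r1). pose proof (Rabs_pos r2).
  set (A := Rabs p + Rabs q + Rabs r). set (N := Rabs z + Rabs x).
  assert (Hg1 : Rabs (2 * p * z + q * x) <= 2 * A * N).
  { eapply Rle_trans; [apply Rabs_triang|]. rewrite !Rabs_mult, Rabs_right by lra.
    unfold A, N. nra. }
  assert (Hg2 : Rabs (q * z + 2 * r * x) <= 2 * A * N).
  { eapply Rle_trans; [apply Rabs_triang|]. rewrite !Rabs_mult, (Rabs_right 2) by lra.
    unfold A, N. nra. }
  assert (HN : N ^ 2 <= 2 * (z ^ 2 + x ^ 2)).
  { unfold N. rewrite <- (pow2_abs z), <- (pow2_abs x). pose proof (pow2_ge_0 (Rabs z - Rabs x)). nra. }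
  eapply Rle_trans; [apply Rabs_triang|]. rewrite !Rabs_mult.
  assert (0 <= A) by (unfold A; lra). assert (0 <= N) by (unfold N; lra).
  apply Rle_trans with (2 * A * N * (Rabs r1 + Rabs r2)); [nra|].
  apply Rle_trans with (2 * A * N * (eps * N)); [apply Rmult_le_compat_l; [nra | exact Hr]|].
  assert (0 <= A * eps) by nra. nra.
Qed.

Lemma pos_def_quad_lower a b c z w : 0 < a -> 0 < c -> b ^ 2 < a * c ->
  (a * c - b ^ 2) / (a + c) * (z ^ 2 + w ^ 2) <= a * z ^ 2 + 2 * b * z * w + c * w ^ 2.
Proof.
  intros Ha Hc Hd.
  set (kap := (a * c - b ^ 2) / (a + c)).
  assert (Hk : kap * (a + c) = a * c - b ^ 2) by (unfold kap; field; lra).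
  assert (Hak : 0 < a - kap).
  { assert ((a - kap) * (a + c) = a ^ 2 + b ^ 2) by (rewrite Rmult_minus_distr_r, Hk; ring).
    pose proof (pow2_ge_0 b). nra. }
  assert (Hid : (a - kap) * (a * z ^ 2 + 2 * b * z * w + c * w ^ 2 - kap * (z ^ 2 + w ^ 2))
                = ((a - kap) * z + b * w) ^ 2 + kap ^ 2 * w ^ 2).
  { transitivity (((a - kap) * z + b * w) ^ 2 + kap ^ 2 * w ^ 2
                  + w ^ 2 * (a * c - b ^ 2 - kap * (a + c))); [ring|].
    rewrite Hk. ring. }
  pose proof (pow2_ge_0 ((a - kap) * z + b * w)). pose proof (pow2_ge_0 (kap * w)).
  assert (0 <= (a - kap) * (a * z ^ 2 + 2 * b * z * w + c * w ^ 2 - kap * (z ^ 2 + w ^ 2))).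
  { rewrite Hid. replace (kap ^ 2 * w ^ 2) with ((kap * w) ^ 2) by ring. lra. }
  nra.
Qed.

Lemma sum_sq_le_shear z x : z ^ 2 + x ^ 2 <= 3 * (z ^ 2 + (x - z) ^ 2).
Proof. pose proof (pow2_ge_0 (3 * z - 2 * x)). pose proof (pow2_ge_0 x). nra. Qed.

Lemma sum_sq_shear_upper (m Kz z x : R) : 0 <= m -> 0 <= Kz ->
  m * z ^ 2 + Kz * (x - z) ^ 2 <= (m + 2 * Kz) * (z ^ 2 + x ^ 2).
Proof. intros Hm HK. pose proof (pow2_ge_0 (x + z)). nra. Qed.

Lemma sum_sq_shear_lower (m Kz z x : R) : 0 < m -> 0 < Kz ->
  m * Kz / (m + Kz) / 3 * (z ^ 2 + x ^ 2) <= m * z ^ 2 + Kz * (x - z) ^ 2.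
Proof.
  intros Hm HK.
  pose proof (pos_def_quad_lower m 0 Kz z (x - z) Hm HK ltac:(nra)) as Hq.
  pose proof (sum_sq_le_shear z x).
  assert (0 < m * Kz / (m + Kz)) by (apply Rdiv_lt_0_compat; nra).
  replace (m * Kz - 0 ^ 2) with (m * Kz) in Hq by ring.
  unfold Rdiv at 2. nra.
Qed.

Lemma chetaev_derivative_near_origin d u Kz Kx k sigma l rho (S : R -> R) :
  0 < Kz -> 0 < sigma -> u <> d -> S 0 = 0 -> is_derive S 0 1 ->
  exists c del, 0 < c /\ 0 < del /\ forall z x, Rabs z < del -> Rabs x < del ->
    c * (z ^ 2 + x ^ 2) <=
    quad_deriv (u - d - Kz) (2 * Kz) (- Kz) z x (fz d u 0 Kz sigma S z x) (fx Kx k sigma l rho z x).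
Proof.
  intros HKz Hs Hud HS0 HS1.
  set (s := u - d). assert (Hs2 : 0 < s ^ 2) by (apply pow2_gt_0; unfold s; lra).
  set (kap := (s ^ 2 * (Kz ^ 2 + Kz) - (s * Kz) ^ 2) / (s ^ 2 + (Kz ^ 2 + Kz))).
  assert (Hkap : 0 < kap) by (unfold kap; apply Rdiv_lt_0_compat; nra).
  set (A := Rabs (s - Kz) + Rabs (2 * Kz) + Rabs (- Kz)).
  assert (HA : 0 <= A) by (unfold A; pose proof (Rabs_pos (s - Kz)); pose proof (Rabs_pos (2 * Kz));
                           pose proof (Rabs_pos (- Kz)); lra).
  set (eps := kap / 3 / (4 * A + 1)).
  assert (Heps : 0 < eps) by (unfold eps; apply Rdiv_lt_0_compat; lra).
  destruct (field_linearization d u Kz Kx k sigma l rho S Hs HS0 HS1 eps Heps) as [del [Hdel Hlin]].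
  exists (kap / 3), del. split; [lra|]. split; [exact Hdel|].
  intros z x Hz Hx.
  set (r1 := fz d u 0 Kz sigma S z x - ((u - d - Kz) * z + Kz * x)).
  set (r2 := fx Kx k sigma l rho z x - (z - x)).
  assert (Hsplit : quad_deriv (s - Kz) (2 * Kz) (- Kz) z x (fz d u 0 Kz sigma S z x) (fx Kx k sigma l rho z x)
    = 2 * (s ^ 2 * z ^ 2 + 2 * (s * Kz) * z * (x - z) + (Kz ^ 2 + Kz) * (x - z) ^ 2)
      + quad_deriv (s - Kz) (2 * Kz) (- Kz) z x r1 r2).
  { unfold r1, r2, quad_deriv, s. ring. }
  rewrite Hsplit.
  pose proof (pos_def_quad_lower (s ^ 2) (s * Kz) (Kz ^ 2 + Kz) z (x - z) Hs2 ltac:(nra) ltac:(nra)) as Hq.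
  fold kap in Hq. pose proof (sum_sq_le_shear z x).
  pose proof (quad_deriv_small (s - Kz) (2 * Kz) (- Kz) z x r1 r2 eps ltac:(lra) (Hlin z x Hz Hx)) as Hr.
  fold A in Hr. apply Rabs_le_between in Hr.
  assert (H4 : 4 * A * eps <= kap / 3).
  { unfold eps. apply Rle_trans with (kap / 3 * (4 * A / (4 * A + 1))); [right; field; lra|].
    pose proof (div_succ_le_1 (4 * A) ltac:(lra)).
    nra. }
  assert (0 <= z ^ 2 + x ^ 2) by nra.
  assert (4 * A * eps * (z ^ 2 + x ^ 2) <= kap / 3 * (z ^ 2 + x ^ 2)) by (apply Rmult_le_compat_r; lra).
  nra.
Qed.

Lemma lyapunov_derivative_near_origin d u Kz Kx k sigma l rho (S : R -> R) :
  0 < Kz -> 0 < sigma -> S 0 = 0 -> is_derive S 0 1 -> u < d ->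
  exists lam del, 0 < lam /\ 0 < del /\ forall z x, Rabs z < del -> Rabs x < del ->
    quad_deriv (d - u + Kz) (- (2 * Kz)) Kz z x (fz d u 0 Kz sigma S z x) (fx Kx k sigma l rho z x)
    <= - lam * quad (d - u + Kz) (- (2 * Kz)) Kz z x.
Proof.
  intros HKz Hsigma HS0 HS1 Hud.
  destruct (chetaev_derivative_near_origin d u Kz Kx k sigma l rho S HKz Hsigma ltac:(lra) HS0 HS1)
    as [c [del [Hc [Hdel Hder]]]].
  set (P := d - u + 2 * Kz).
  exists (c / P), del. split; [apply Rdiv_lt_0_compat; unfold P; lra|]. split; [exact Hdel|].
  intros z x Hz Hx. pose proof (Hder z x Hz Hx).
  assert (Hup : quad (d - u + Kz) (- (2 * Kz)) Kz z x <= P * (z ^ 2 + x ^ 2)).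
  { replace (quad (d - u + Kz) (- (2 * Kz)) Kz z x) with ((d - u) * z ^ 2 + Kz * (x - z) ^ 2)
      by (unfold quad; ring).
    apply sum_sq_shear_upper; lra. }
  assert (c / P * quad (d - u + Kz) (- (2 * Kz)) Kz z x <= c * (z ^ 2 + x ^ 2)).
  { apply Rmult_le_reg_l with P; [unfold P; lra|].
    replace (P * (c / P * quad (d - u + Kz) (- (2 * Kz)) Kz z x))
      with (c * quad (d - u + Kz) (- (2 * Kz)) Kz z x) by (field; unfold P; lra).
    pose proof (pow2_ge_0 z). pose proof (pow2_ge_0 x). nra. }
  enough (quad_deriv (d - u + Kz) (- (2 * Kz)) Kz z x (fz d u 0 Kz sigma S z x) (fx Kx k sigma l rho z x)
          = - quad_deriv (u - d - Kz) (2 * Kz) (- Kz) z x (fz d u 0 Kz sigma S z x)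
                (fx Kx k sigma l rho z x)) by lra.
  unfold quad_deriv. ring.
Qed.

(** * Stability below [d] and instability above *)

Lemma abs_lt_of_sum_sq_lt z x r : 0 < r -> z ^ 2 + x ^ 2 < r ^ 2 -> Rabs z < r /\ Rabs x < r.
Proof.
  intros Hr H. pose proof (pow2_abs z). pose proof (pow2_abs x).
  pose proof (Rabs_pos z). pose proof (Rabs_pos x). split; nra.
Qed.

Lemma nrm_sq z x : nrm z x ^ 2 = z ^ 2 + x ^ 2.
Proof. unfold nrm. rewrite pow2_sqrt; nra. Qed.

Lemma sum_sq_lt_of_nrm_lt z x r : nrm z x < r -> z ^ 2 + x ^ 2 < r ^ 2.
Proof. intros H. rewrite <- nrm_sq. pose proof (sqrt_pos (z ^ 2 + x ^ 2)). unfold nrm in *. nra. Qed.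

Lemma nrm_le_scaled z x z0 x0 C : 0 <= C -> z ^ 2 + x ^ 2 <= C * (z0 ^ 2 + x0 ^ 2) ->
  nrm z x <= sqrt C * nrm z0 x0.
Proof.
  intros HC H. unfold nrm. rewrite <- sqrt_mult by (auto; nra).
  apply sqrt_le_1; nra.
Qed.

Lemma nrm_exp_decay z x z0 x0 k1 P lam t Vt V0 : 0 < k1 -> 0 <= P ->
  k1 * (z ^ 2 + x ^ 2) <= Vt -> Vt <= V0 * exp (- lam * t) -> V0 <= P * (z0 ^ 2 + x0 ^ 2) ->
  nrm z x <= sqrt (P / k1) * exp (- (lam / 2) * t) * nrm z0 x0.
Proof.
  intros Hk1 HP Hlow Hdecay Hup. pose proof (exp_pos (- lam * t)).
  assert (HN : z ^ 2 + x ^ 2 <= P / k1 * exp (- lam * t) * (z0 ^ 2 + x0 ^ 2)).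
  { apply Rmult_le_reg_l with k1; [lra|].
    replace (k1 * (P / k1 * exp (- lam * t) * (z0 ^ 2 + x0 ^ 2)))
      with (P * (z0 ^ 2 + x0 ^ 2) * exp (- lam * t)) by (field; lra).
    assert (V0 * exp (- lam * t) <= P * (z0 ^ 2 + x0 ^ 2) * exp (- lam * t))
      by (apply Rmult_le_compat_r; lra).
    lra. }
  assert (HPk : 0 <= P / k1) by (apply Rdiv_le_0_compat; lra).
  eapply Rle_trans; [apply (nrm_le_scaled _ _ z0 x0 (P / k1 * exp (- lam * t))); [nra | exact HN]|].
  replace (exp (- lam * t)) with (exp (- (lam / 2) * t) ^ 2)
    by (simpl; rewrite Rmult_1_r, <- exp_plus; f_equal; field).
  rewrite sqrt_mult, sqrt_pow2 by (auto; try apply pow2_ge_0; left; apply exp_pos).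
  right; ring.
Qed.

Lemma stable_below_threshold d u Kz Kx k sigma l rho (S : R -> R) :
  0 < Kz -> 0 < sigma -> S 0 = 0 -> is_derive S 0 1 -> u < d ->
  loc_exp_stable d u 0 Kz Kx k sigma l rho S.
Proof.
  intros HKz Hsigma HS0 HS1 Hud.
  destruct (lyapunov_derivative_near_origin d u Kz Kx k sigma l rho S HKz Hsigma HS0 HS1 Hud)
    as [lam [del [Hlam [Hdel Hder]]]].
  set (m := d - u). assert (Hm : 0 < m) by (unfold m; lra).
  set (V := quad (m + Kz) (- (2 * Kz)) Kz).
  set (P := m + 2 * Kz). set (k1 := m * Kz / (m + Kz) / 3).
  assert (Hk1 : 0 < k1) by (unfold k1; apply Rdiv_lt_0_compat; [apply Rdiv_lt_0_compat|]; nra).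
  assert (HV : forall z x, V z x = m * z ^ 2 + Kz * (x - z) ^ 2) by (intros; unfold V, quad; ring).
  assert (HVup : forall z x, V z x <= P * (z ^ 2 + x ^ 2))
    by (intros; rewrite HV; apply sum_sq_shear_upper; lra).
  assert (HVlow : forall z x, k1 * (z ^ 2 + x ^ 2) <= V z x)
    by (intros; rewrite HV; apply sum_sq_shear_lower; lra).
  set (L := k1 * del ^ 2).
  assert (HL : 0 < L) by (unfold L; pose proof (pow_lt del 2 Hdel); nra).
  exists (sqrt (L / P)), (sqrt (P / k1)), (lam / 2).
  split; [apply sqrt_lt_R0, Rdiv_lt_0_compat; unfold P; lra|].
  split; [apply sqrt_lt_R0, Rdiv_lt_0_compat; unfold P; lra|].
  split; [lra|].
  intros T zt xt [Hz0 [Hx0 Hsol]] Hn0 t Ht.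
  assert (HV0 : V (zt 0) (xt 0) < L).
  { eapply Rle_lt_trans; [apply HVup|].
    apply sum_sq_lt_of_nrm_lt in Hn0. rewrite pow2_sqrt in Hn0 by (apply Rdiv_le_0_compat; unfold P; lra).
    apply Rmult_lt_compat_l with (r := P) in Hn0; [|unfold P; lra].
    replace (P * (L / P)) with L in Hn0 by (field; unfold P; lra). exact Hn0. }
  assert (Hdecay : V (zt t) (xt t) <= V (zt 0) (xt 0) * exp (- lam * t)).
  { apply (lyapunov_decay (fun t => V (zt t) (xt t))
             (fun t => quad_deriv (m + Kz) (- (2 * Kz)) Kz (zt t) (xt t)
                         (fz d u 0 Kz sigma S (zt t) (xt t)) (fx Kx k sigma l rho (zt t) (xt t)))
             lam L T); auto; [lra | now apply filterlim_quad | | |].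
    - intros s Hs. destruct (Hsol s Hs). now apply is_derive_quad.
    - pose proof (HVlow (zt 0) (xt 0)). nra.
    - intros s Hs Hhs.
      assert (HN : zt s ^ 2 + xt s ^ 2 < del ^ 2).
      { apply Rmult_lt_reg_l with k1; [lra|]. pose proof (HVlow (zt s) (xt s)). unfold L in Hhs. lra. }
      destruct (abs_lt_of_sum_sq_lt _ _ _ Hdel HN). unfold m. now apply Hder. }
  apply (nrm_exp_decay _ _ _ _ k1 P lam t (V (zt t) (xt t)) (V (zt 0) (xt 0))); auto; unfold P; lra.
Qed.

Lemma nrm_lt_of_sum_sq_lt z x r : 0 < r -> z ^ 2 + x ^ 2 < r ^ 2 -> nrm z x < r.
Proof.
  intros Hr H. unfold nrm. rewrite <- (sqrt_pow2 r) by lra.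
  apply sqrt_lt_1; [nra | nra | exact H].
Qed.

Lemma clipped_solution_exists d u Kz Kx k sigma l rho (S : R -> R) r T z0 x0 :
  0 < sigma -> smooth S -> 0 <= r -> 0 < T ->
  exists zt xt : R -> R, zt 0 = z0 /\ xt 0 = x0 /\ (forall t, continuous zt t /\ continuous xt t) /\
    forall t, 0 < t < T ->
      is_derive zt t (fz d u 0 Kz sigma S (clip (- r) r (zt t)) (clip (- r) r (xt t))) /\
      is_derive xt t (fx Kx k sigma l rho (clip (- r) r (zt t)) (clip (- r) r (xt t))).
Proof.
  intros Hsigma HS Hr HT.
  destruct (bounded_lipschitz_on2_clip r _ Hr (bounded_lipschitz_on2_fz d u 0 Kz sigma r S Hsigma Hr HS))
    as [L1 [M1 [HL1 [HG1 HB1]]]].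
  destruct (bounded_lipschitz_on2_clip r _ Hr (bounded_lipschitz_on2_fx Kx k sigma l rho r Hsigma Hr))
    as [L2 [M2 [HL2 [HG2 HB2]]]].
  apply (picard_lindelof (fun a b => fz d u 0 Kz sigma S (clip (- r) r a) (clip (- r) r b))
           (fun a b => fx Kx k sigma l rho (clip (- r) r a) (clip (- r) r b)) (L1 + L2) (Rmax M1 M2));
    auto; [lra | | | |].
  - apply (lipschitz2_le _ L1); auto; lra.
  - apply (lipschitz2_le _ L2); auto; lra.
  - intros a b. eapply Rle_trans; [apply HB1 | apply Rmax_l].
  - intros a b. eapply Rle_trans; [apply HB2 | apply Rmax_r].
Qed.

Lemma is_sol_of_clipped d u Kz Kx k sigma l rho (S : R -> R) r T (zt xt : R -> R) : 0 < r ->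
  (forall t, continuous zt t /\ continuous xt t) ->
  (forall t, 0 < t < T ->
      is_derive zt t (fz d u 0 Kz sigma S (clip (- r) r (zt t)) (clip (- r) r (xt t))) /\
      is_derive xt t (fx Kx k sigma l rho (clip (- r) r (zt t)) (clip (- r) r (xt t)))) ->
  (forall t, 0 <= t < T -> zt t ^ 2 + xt t ^ 2 < r ^ 2) ->
  is_sol d u 0 Kz Kx k sigma l rho S T zt xt.
Proof.
  intros Hr Hcont Hder Hin.
  split; [apply filterlim_at_right_of_continuous, Hcont|].
  split; [apply filterlim_at_right_of_continuous, Hcont|].
  intros t Ht. destruct (Hder t Ht) as [Dz Dx].
  destruct (abs_lt_of_sum_sq_lt _ _ _ Hr (Hin t ltac:(lra))) as [Hz Hx].
  rewrite !clip_id in Dz, Dx by (apply Rabs_le_between; lra). auto.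
Qed.

Lemma chetaev_growth d u Kz Kx k sigma l rho (S : R -> R) c del T (zt xt : R -> R) :
  d < u -> 0 < Kz -> 0 < c -> 0 < del ->
  (forall z x, Rabs z < del -> Rabs x < del ->
     c * (z ^ 2 + x ^ 2) <=
     quad_deriv (u - d - Kz) (2 * Kz) (- Kz) z x (fz d u 0 Kz sigma S z x) (fx Kx k sigma l rho z x)) ->
  is_sol d u 0 Kz Kx k sigma l rho S T zt xt ->
  (forall t, 0 <= t < T -> zt t ^ 2 + xt t ^ 2 < del ^ 2) ->
  forall t, 0 <= t < T ->
    quad (u - d - Kz) (2 * Kz) (- Kz) (zt 0) (xt 0) * exp (c / (u - d) * t)
    <= (u - d) * (zt t ^ 2 + xt t ^ 2).
Proof.
  intros Hdu HKz Hc Hdel Hder [Hzr [Hxr Hsol]] Hin t Ht.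
  set (s := u - d) in *. assert (Hs : 0 < s) by (unfold s; lra).
  assert (HW : forall z x, quad (s - Kz) (2 * Kz) (- Kz) z x = s * z ^ 2 - Kz * (x - z) ^ 2)
    by (intros; unfold quad; ring).
  eapply Rle_trans.
  - apply (gronwall_lower (fun t => quad (s - Kz) (2 * Kz) (- Kz) (zt t) (xt t))
             (fun t => quad_deriv (s - Kz) (2 * Kz) (- Kz) (zt t) (xt t)
                         (fz d u 0 Kz sigma S (zt t) (xt t)) (fx Kx k sigma l rho (zt t) (xt t)))
             (c / s) T t); [now apply filterlim_quad | | exact Ht |].
    + intros r Hr. destruct (Hsol r Hr). now apply is_derive_quad.
    + intros r Hr. destruct (abs_lt_of_sum_sq_lt _ _ _ Hdel (Hin r ltac:(lra))) as [Hz Hx].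
      pose proof (Hder _ _ Hz Hx). rewrite HW.
      replace (c / s * (s * zt r ^ 2 - Kz * (xt r - zt r) ^ 2))
        with (c * zt r ^ 2 - c / s * Kz * (xt r - zt r) ^ 2) by (field; lra).
      assert (0 <= c / s * Kz * (xt r - zt r) ^ 2)
        by (apply Rmult_le_pos; [apply Rmult_le_pos; [apply Rdiv_le_0_compat|]|apply pow2_ge_0]; lra).
      assert (0 <= c * xt r ^ 2) by (apply Rmult_le_pos; [lra | apply pow2_ge_0]).
      lra.
  - rewrite HW.
    assert (0 <= Kz * (xt t - zt t) ^ 2) by (apply Rmult_le_pos; [lra | apply pow2_ge_0]).
    assert (0 <= s * xt t ^ 2) by (apply Rmult_le_pos; [lra | apply pow2_ge_0]).
    lra.
Qed.

Lemma clipped_solution_stays_in_ball d u Kz Kx k sigma l rho (S : R -> R) r delta T (zt xt : R -> R) :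
  0 < r ->
  (forall T zt xt, is_sol d u 0 Kz Kx k sigma l rho S T zt xt -> nrm (zt 0) (xt 0) < delta ->
     forall t, 0 <= t < T -> nrm (zt t) (xt t) < r / 2) ->
  (forall t, continuous zt t /\ continuous xt t) ->
  (forall t, 0 < t < T ->
      is_derive zt t (fz d u 0 Kz sigma S (clip (- r) r (zt t)) (clip (- r) r (xt t))) /\
      is_derive xt t (fx Kx k sigma l rho (clip (- r) r (zt t)) (clip (- r) r (xt t)))) ->
  nrm (zt 0) (xt 0) < delta -> zt 0 ^ 2 + xt 0 ^ 2 < r ^ 2 ->
  forall t, 0 <= t < T -> zt t ^ 2 + xt t ^ 2 < r ^ 2.
Proof.
  intros Hr Hstab Hcont Hder Hn0 HN0.
  set (N := fun t => quad 1 0 1 (zt t) (xt t)).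
  assert (HN : forall t, N t = zt t ^ 2 + xt t ^ 2) by (intros; unfold N, quad; ring).
  assert (HNcont : forall t, continuous N t) by (intros t; destruct (Hcont t); now apply filterlim_quad).
  intros t Ht. rewrite <- HN. revert t Ht.
  apply (stays_below N T ((r / 2) ^ 2)); [nra | rewrite HN; nra | | |].
  - apply filterlim_at_right_of_continuous, HNcont.
  - intros t _. apply continuity_pt_filterlim, HNcont.
  - intros t Ht Hb s Hs.
    assert (Hsol : is_sol d u 0 Kz Kx k sigma l rho S t zt xt).
    { apply (is_sol_of_clipped _ _ _ _ _ _ _ _ _ r); auto.
      - intros s' Hs'. apply Hder. lra.
      - intros s' Hs'. rewrite <- HN. auto. }
    pose proof (Hstab t zt xt Hsol Hn0 s Hs) as Hs2.
    apply sum_sq_lt_of_nrm_lt in Hs2. rewrite HN. lra.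
Qed.

Lemma unstable_above_threshold d u Kz Kx k sigma l rho (S : R -> R) :
  0 < Kz -> 0 < sigma -> smooth S -> S 0 = 0 -> is_derive S 0 1 -> d < u ->
  unstable d u 0 Kz Kx k sigma l rho S.
Proof.
  intros HKz Hsigma HS HS0 HS1 Hdu Hstab.
  destruct (chetaev_derivative_near_origin d u Kz Kx k sigma l rho S HKz Hsigma ltac:(lra) HS0 HS1)
    as [c [del [Hc [Hdel Hder]]]].
  set (mu := c / (u - d)). assert (Hmu : 0 < mu) by (unfold mu; apply Rdiv_lt_0_compat; lra).
  destruct (Hstab (del / 2) ltac:(lra)) as [delta [Hdelta Hly]].
  set (y0 := Rmin delta del / 4).
  assert (Hy0 : 0 < y0 /\ y0 <= delta / 4 /\ y0 <= del / 4).
  { pose proof (Rmin_pos delta del Hdelta Hdel). pose proof (Rmin_l delta del).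
    pose proof (Rmin_r delta del). unfold y0. lra. }
  set (tstar := del ^ 2 / (mu * y0 ^ 2)).
  assert (Hts : 0 < tstar).
  { unfold tstar. apply Rdiv_lt_0_compat; [apply pow_lt; lra|].
    apply Rmult_lt_0_compat; [lra | apply pow_lt; lra]. }
  destruct (clipped_solution_exists d u Kz Kx k sigma l rho S del (tstar + 1) y0 y0 Hsigma HS
              ltac:(lra) ltac:(lra)) as [zt [xt [Hz0 [Hx0 [Hcont Hder_clip]]]]].
  assert (Hin : forall t, 0 <= t < tstar + 1 -> zt t ^ 2 + xt t ^ 2 < del ^ 2).
  { apply (clipped_solution_stays_in_ball d u Kz Kx k sigma l rho S del delta); auto;
      rewrite Hz0, Hx0; [apply nrm_lt_of_sum_sq_lt|]; nra. }
  pose proof (chetaev_growth d u Kz Kx k sigma l rho S c del (tstar + 1) zt xt Hdu HKz Hc Hdel Hder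
                (is_sol_of_clipped _ _ _ _ _ _ _ _ _ _ _ _ _ Hdel Hcont Hder_clip Hin) Hin tstar
                ltac:(lra)) as Hgrow.
  fold mu in Hgrow. rewrite Hz0, Hx0 in Hgrow.
  replace (quad (u - d - Kz) (2 * Kz) (- Kz) y0 y0) with ((u - d) * y0 ^ 2) in Hgrow
    by (unfold quad; ring).
  pose proof (Hin tstar ltac:(lra)) as Hend.
  pose proof (exp_ineq1_le (mu * tstar)).
  assert (Hy2 : mu * tstar * y0 ^ 2 = del ^ 2)
    by (unfold tstar; field; split; try apply pow_nonzero; lra).
  assert (del ^ 2 <= y0 ^ 2 * exp (mu * tstar)) by (pose proof (pow2_ge_0 y0); nra).
  assert (y0 ^ 2 * exp (mu * tstar) <= zt tstar ^ 2 + xt tstar ^ 2).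
  { apply Rmult_le_reg_l with (u - d); [lra|]. lra. }
  lra.
Qed.

Theorem lemma1 (d Kz Kx k sigma l rho : R) (S : R -> R)
  (hd : 0 < d) (hKz : 0 < Kz) (hKx : 0 < Kx) (hk : 0 < k)
  (hsigma : 0 < sigma) (hl : 0 < l) (hrho : 0 <= rho)
  (hS_smooth : smooth S) (hS_odd : odd_fun S) (hS_sat : saturating S)
  (hS0 : S 0 = 0) (hS'0 : is_derive S 0 1) :
  let ustar := d in
  (forall u, 0 < u < ustar -> loc_exp_stable d u 0 Kz Kx k sigma l rho S) /\
  (forall u, ustar < u -> unstable d u 0 Kz Kx k sigma l rho S).
Proof.
  intros ustar. split; intros u Hu; unfold ustar in Hu.
  - apply stable_below_threshold; auto. lra.
  - apply unstable_above_threshold; auto.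
Qed.
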